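(* Fix $\alpha\in(0,1)$ and constants $c_1,c_2,c_3,c_4>0$. There exist $C>0$ and $n_0$ such that for all $n\ge n_0$, every prime $p$ with $c_1n^\alpha\le p\le c_2n^\alpha$, every integer $t\ge c_3p^3$, every $b\in\{0,1\}$, and all integers $a_0,a_1,\dots,a_t$ and $u_0,u_1,\dots,u_t$ with $1\le a_i\le c_4\,p/\log n$ for all $i\in\{1,\dots,t\}$, setting $S=a_0+\sum_{i=1}^ta_ix_i$ and $U=u_0+\sum_{i=1}^tu_ix_i$, $$\Pr_{x\sim\mathrm{Unif}(\{0,1\}^t)}\big[\mathrm{MM}_p(S)\oplus(U\bmod 2)=b\big]\ \ge\ \tfrac12-\tfrac{C}{\log n}.$$
   Context: For odd prime $p$ and integer $a$, $\mathrm{MM}_p(a)=0$ if $(a\bmod p)\in\{0,\dots,(p-1)/2\}$ and $\mathrm{MM}_p(a)=1$ otherwise, where $a\bmod p\in\{0,\dots,p-1\}$. *)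

From Stdlib Require Import Reals ZArith List Znumtheory.
Import ListNotations.
Open Scope R_scope.

Definition MM (p a : Z) : bool :=
  negb (Z.leb (Z.modulo a p) (Z.div (p - 1) 2)).

(* all vectors in {0,1}^t, each exactly once, as bool lists of length t;
   coordinate x_i (1 <= i <= t) is  nth (i-1) x false *)
Fixpoint bool_vectors (t : nat) : list (list bool) :=
  match t with
  | O => [[]]
  | S k => map (cons false) (bool_vectors k) ++ map (cons true) (bool_vectors k)
  end.

Definition bit (x : list bool) (i : nat) : Z :=
  if nth (i - 1) x false then 1%Z else 0%Z.

Definition lin_form (c : nat -> Z) (t : nat) (x : list bool) : Z :=
  (c 0%nat + fold_right Z.add 0%Z (map (fun i => c i * bit x i)%Z (seq 1 t)))%Z.

Definition prob_unif (t : nat) (P : list bool -> bool) : R :=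
  INR (length (filter P (bool_vectors t))) / 2 ^ t.

From Stdlib Require Import Reals ZArith List Znumtheory Lra Lia.
Import ListNotations.
Open Scope R_scope.

(* Up to sign, the bias of the event is the correlation E[(-1)^{MM_p(S)} (-1)^U].
   Expand the p-periodic function s |-> (-1)^{MM_p(s)} in the cosine basis
   cos (2 pi r (s - k) / p).  For p odd the r = 0 coefficient is
   (1/p) sum_k (-1)^{MM_p(k)} = 1/p.  For 1 <= r < p the product with (-1)^U is a
   sum of two terms cos (phi + sum_i th_i x_i), whose average over the cube is at
   most prod_i |cos (th_i / 2)|; here th_i / 2 = pi (2 r a_i +- p u_i) / (2 p) and
   2 p does not divide 2 r a_i +- p u_i since 1 <= r, a_i < p, so each factor is
   at most rho = cos (pi / 2p) <= exp (- 1 / (4 p^2)).  With t >= c3 p^3 the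
   correlation is at most 1/p + p rho^t = O(1/p), and p >= c1 n^alpha >=
   alpha c1 log n.  The hypothesis a_i <= c4 p / log n only serves to give a_i < p
   once log n > c4. *)

Fixpoint sumR {A : Type} (F : A -> R) (l : list A) : R :=
  match l with [] => 0 | x :: l' => F x + sumR F l' end.

Lemma sumR_app {A : Type} (F : A -> R) (l1 l2 : list A) :
  sumR F (l1 ++ l2) = sumR F l1 + sumR F l2.
Proof. induction l1 as [|x l1 IH]; simpl; [lra|]. rewrite IH; lra. Qed.

Lemma sumR_map {A B : Type} (F : B -> R) (g : A -> B) (l : list A) :
  sumR F (map g l) = sumR (fun x => F (g x)) l.
Proof. induction l as [|x l IH]; simpl; [|rewrite IH]; reflexivity. Qed.

Lemma sumR_ext_in {A : Type} (F G : A -> R) (l : list A) :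
  (forall x, In x l -> F x = G x) -> sumR F l = sumR G l.
Proof.
  induction l as [|x l IH]; simpl; intros H; [reflexivity|].
  rewrite H, IH by auto. reflexivity.
Qed.

Lemma sumR_plus {A : Type} (F G : A -> R) (l : list A) :
  sumR (fun x => F x + G x) l = sumR F l + sumR G l.
Proof. induction l as [|x l IH]; simpl; [lra|]. rewrite IH; lra. Qed.

Lemma sumR_scal_l {A : Type} (c : R) (F : A -> R) (l : list A) :
  sumR (fun x => c * F x) l = c * sumR F l.
Proof. induction l as [|x l IH]; simpl; [lra|]. rewrite IH; lra. Qed.

Lemma sumR_scal_r {A : Type} (c : R) (F : A -> R) (l : list A) :
  sumR F l * c = sumR (fun x => F x * c) l.
Proof. induction l as [|x l IH]; simpl; [lra|]. rewrite <- IH; lra. Qed.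

Lemma sumR_const {A : Type} (c : R) (l : list A) :
  sumR (fun _ => c) l = INR (length l) * c.
Proof.
  induction l as [|x l IH]; simpl length; [simpl; lra|].
  rewrite S_INR; simpl; rewrite IH; lra.
Qed.

Lemma sumR_abs_le {A : Type} (F : A -> R) (l : list A) (M : R) :
  (forall x, In x l -> Rabs (F x) <= M) -> Rabs (sumR F l) <= INR (length l) * M.
Proof.
  induction l as [|x l IH]; intros H; simpl length.
  - simpl; rewrite Rabs_R0; lra.
  - rewrite S_INR; simpl sumR.
    pose proof (Rabs_triang (F x) (sumR F l)).
    pose proof (H x (in_eq x l)).
    assert (Rabs (sumR F l) <= INR (length l) * M) by (apply IH; auto using in_cons).
    lra.
Qed.

Lemma sumR_swap {A B : Type} (F : A -> B -> R) (l : list A) (m : list B) :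
  sumR (fun x => sumR (F x) m) l = sumR (fun y => sumR (fun x => F x y) l) m.
Proof.
  induction l as [|x l IH]; simpl.
  - rewrite sumR_const; lra.
  - rewrite IH, <- sumR_plus; reflexivity.
Qed.

Lemma sumR_indicator {A : Type} (eq_dec : forall x y : A, {x = y} + {x <> y})
    (v : R) (m : A) (l : list A) :
  sumR (fun k => if eq_dec k m then v else 0) l = INR (count_occ eq_dec l m) * v.
Proof.
  induction l as [|x l IH]; simpl; [lra|].
  rewrite IH; destruct (eq_dec x m); rewrite ?S_INR; lra.
Qed.

Lemma count_filter_sumR {A : Type} (P : A -> bool) (l : list A) :
  INR (length (filter P l)) = sumR (fun x => if P x then 1 else 0) l.
Proof.
  induction l as [|x l IH]; simpl; [reflexivity|].
  destruct (P x); simpl length; rewrite ?S_INR, IH; lra.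
Qed.

Lemma cos_plus_2PI_IZR (x : R) (q : Z) : cos (x + 2 * PI * IZR q) = cos x.
Proof.
  destruct (Z_le_gt_dec 0 q) as [Hq|Hq].
  - rewrite <- (Z2Nat.id q Hq), <- INR_IZR_INZ, <- (cos_period x (Z.to_nat q)).
    f_equal; ring.
  - rewrite <- (cos_period (x + 2 * PI * IZR q) (Z.to_nat (- q))).
    rewrite INR_IZR_INZ, Z2Nat.id, opp_IZR by lia.
    f_equal; ring.
Qed.

Lemma sin_plus_2PI_IZR (x : R) (q : Z) : sin (x + 2 * PI * IZR q) = sin x.
Proof. rewrite !sin_cos, <- Rplus_assoc, cos_plus_2PI_IZR; reflexivity. Qed.

Lemma cos_plus_PI_IZR (x : R) (q : Z) :
  cos (x + PI * IZR q) = if Z.odd q then - cos x else cos x.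
Proof.
  rewrite (Z.div2_odd q) at 1; rewrite plus_IZR, mult_IZR.
  replace (x + PI * (IZR 2 * IZR (Z.div2 q) + IZR (Z.b2z (Z.odd q))))
    with (x + PI * IZR (Z.b2z (Z.odd q)) + 2 * PI * IZR (Z.div2 q)) by (simpl; ring).
  rewrite cos_plus_2PI_IZR.
  destruct (Z.odd q); simpl.
  - rewrite Rmult_1_r; apply neg_cos.
  - rewrite Rmult_0_r, Rplus_0_r; reflexivity.
Qed.

Lemma cos_PI_IZR (q : Z) : cos (PI * IZR q) = if Z.odd q then -1 else 1.
Proof.
  rewrite <- (Rplus_0_l (PI * IZR q)), cos_plus_PI_IZR, cos_0; reflexivity.
Qed.

Lemma Rabs_cos_PI_div_le (q m : Z) :
  (0 < q)%Z -> ~ (q | m)%Z -> Rabs (cos (PI * IZR m / IZR q)) <= cos (PI / IZR q).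
Proof.
  intros Hq Hm.
  pose proof (Z.mod_pos_bound m q Hq) as Hb.
  assert (Hr : (m mod q <> 0)%Z) by (intros E; apply Hm, Z.mod_divide; lia).
  assert (Pq : 0 < IZR q) by (apply IZR_lt; lia).
  assert (Hr1 : 1 <= IZR (m mod q)) by (apply IZR_le; lia).
  assert (Hr2 : IZR (m mod q) <= IZR q - 1) by (rewrite <- minus_IZR; apply IZR_le; lia).
  pose proof PI_RGT_0.
  replace (PI * IZR m / IZR q) with (PI * IZR (m mod q) / IZR q + PI * IZR (m / q)).
  2:{ rewrite (Z.div_mod m q) at 3 by lia. rewrite plus_IZR, mult_IZR. field. lra. }
  assert (Hlo : PI / IZR q <= PI * IZR (m mod q) / IZR q).
  { unfold Rdiv; apply Rmult_le_compat_r; [left; apply Rinv_0_lt_compat|]; nra. }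
  assert (Hhi : PI * IZR (m mod q) / IZR q <= PI - PI / IZR q).
  { replace (PI - PI / IZR q) with (PI * (IZR q - 1) / IZR q) by (field; lra).
    unfold Rdiv; apply Rmult_le_compat_r; [left; apply Rinv_0_lt_compat|]; nra. }
  assert (H0 : 0 <= PI / IZR q) by (unfold Rdiv; apply Rmult_le_pos; [lra|left; apply Rinv_0_lt_compat; lra]).
  rewrite cos_plus_PI_IZR.
  assert (Habs : Rabs (cos (PI * IZR (m mod q) / IZR q)) <= cos (PI / IZR q)).
  { apply Rabs_le; split.
    - replace (- cos (PI / IZR q)) with (cos (PI - PI / IZR q)).
      + apply cos_decr_1; lra.
      + replace (PI - PI / IZR q) with (- (PI / IZR q) + PI) by ring.
        rewrite neg_cos, cos_neg; reflexivity.
    - apply cos_decr_1; lra. }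
  destruct (Z.odd (m / q)); [rewrite Rabs_Ropp|]; exact Habs.
Qed.

Lemma sin_half_mul_sum_cos (phi : R) (n : nat) :
  2 * sin (phi / 2) * sumR (fun r => cos (INR r * phi)) (seq 0 n)
  = sin ((INR n - / 2) * phi) + sin (phi / 2).
Proof.
  induction n as [|n IH].
  - simpl. replace ((0 - / 2) * phi) with (- (phi / 2)) by field.
    rewrite sin_neg; lra.
  - rewrite seq_S, sumR_app, Rmult_plus_distr_l, IH; simpl sumR.
    rewrite S_INR.
    replace ((INR n - / 2) * phi) with (INR n * phi - phi / 2) by field.
    replace ((INR n + 1 - / 2) * phi) with (INR n * phi + phi / 2) by field.
    rewrite sin_minus, sin_plus; ring.
Qed.

Lemma sum_cos_roots_of_unity (P : nat) (j : Z) : (0 < P)%nat ->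
  sumR (fun r => cos (2 * PI * INR r * IZR j / INR P)) (seq 0 P)
  = if (j mod Z.of_nat P =? 0)%Z then INR P else 0.
Proof.
  intros HP; assert (PP : 0 < INR P) by (apply lt_0_INR; lia).
  destruct (Z.eqb_spec (j mod Z.of_nat P) 0) as [E|E].
  - apply Z.mod_divide in E as [q ->]; [|lia].
    rewrite (sumR_ext_in _ (fun _ => 1)), sumR_const, length_seq; [ring|].
    intros r _.
    replace (2 * PI * INR r * IZR (q * Z.of_nat P) / INR P)
      with (0 + 2 * PI * IZR (Z.of_nat r * q)) by (rewrite !mult_IZR, <- !INR_IZR_INZ; field; lra).
    rewrite cos_plus_2PI_IZR, cos_0; reflexivity.
  - set (phi := 2 * PI * IZR j / INR P).
    rewrite (sumR_ext_in _ (fun r => cos (INR r * phi))) by (intros; unfold phi; f_equal; field; lra).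
    (* phi / 2 is not a multiple of PI, and sin ((P - 1/2) phi) = - sin (phi / 2). *)
    assert (Hs : sin (phi / 2) <> 0).
    { intros S. apply sin_eq_0_0 in S as [q Hq]. apply E.
      assert (Hj : IZR j = IZR q * INR P).
      { pose proof PI_RGT_0.
        replace (IZR j) with (phi / 2 * INR P / PI) by (unfold phi; field; lra).
        rewrite Hq; field; lra. }
      rewrite INR_IZR_INZ, <- mult_IZR in Hj; apply eq_IZR in Hj.
      rewrite Hj; apply Z.mod_mul; lia. }
    pose proof (sin_half_mul_sum_cos phi P) as T.
    replace ((INR P - / 2) * phi) with (- (phi / 2) + 2 * PI * IZR j) in T
      by (unfold phi; field; lra).
    rewrite sin_plus_2PI_IZR, sin_neg in T.
    apply (Rmult_eq_reg_l (2 * sin (phi / 2))); lra.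
Qed.

Lemma cos_fourier_periodic (P : nat) (f : Z -> R) (s : Z) :
  (0 < P)%nat -> (forall z, f (z mod Z.of_nat P)%Z = f z) ->
  INR P * f s
  = sumR (fun r => sumR (fun k => f (Z.of_nat k)
          * cos (2 * PI * INR r * IZR (s - Z.of_nat k) / INR P)) (seq 0 P)) (seq 0 P).
Proof.
  intros HP Hf; rewrite sumR_swap.
  set (p := Z.of_nat P); set (k0 := Z.to_nat (s mod p)).
  pose proof (Z.mod_pos_bound s p ltac:(lia)) as Hb.
  transitivity (sumR (fun k => if Nat.eq_dec k k0 then INR P * f s else 0) (seq 0 P)).
  - rewrite sumR_indicator, (proj1 (NoDup_count_occ' _ _) (seq_NoDup P 0)).
    + simpl; ring.
    + apply in_seq; unfold k0, p in *; lia.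
  - apply sumR_ext_in; intros k Hk; apply in_seq in Hk.
    rewrite sumR_scal_l, sum_cos_roots_of_unity by lia; fold p.
    destruct (Nat.eq_dec k k0) as [->|Hne].
    + unfold k0; rewrite Z2Nat.id, Hf by lia.
      replace (s - s mod p)%Z with ((s / p) * p)%Z by (rewrite (Z.mod_eq s p) by lia; ring).
      rewrite Z.mod_mul, Z.eqb_refl by lia; ring.
    + destruct (Z.eqb_spec ((s - Z.of_nat k) mod p) 0) as [E|E]; [|ring].
      exfalso; apply Hne.
      apply Z.mod_divide in E as [c Hc]; [|lia].
      unfold k0; replace s with (Z.of_nat k + c * p)%Z by lia.
      rewrite Z.mod_add, Z.mod_small by lia; lia.
Qed.

Definition mm_sign (p s : Z) : R := if MM p s then -1 else 1.

Lemma mm_sign_mod (p s : Z) : (0 < p)%Z -> mm_sign p (s mod p) = mm_sign p s.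
Proof. intros Hp; unfold mm_sign, MM; rewrite Z.mod_mod by lia; reflexivity. Qed.

Lemma Rabs_mm_sign (p s : Z) : Rabs (mm_sign p s) = 1.
Proof. unfold mm_sign; destruct (MM p s); [rewrite Rabs_left|rewrite Rabs_R1]; lra. Qed.

Lemma sum_mm_sign (p : Z) : Z.odd p = true -> (0 < p)%Z ->
  sumR (fun k => mm_sign p (Z.of_nat k)) (seq 0 (Z.to_nat p)) = 1.
Proof.
  intros Hodd Hp; apply Z.odd_spec in Hodd as [w Hw].
  assert (Hhalf : ((p - 1) / 2 = w)%Z).
  { rewrite Hw; replace (2 * w + 1 - 1)%Z with (w * 2)%Z by ring; apply Z.div_mul; lia. }
  replace (Z.to_nat p) with (S (Z.to_nat w) + Z.to_nat w)%nat by lia.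
  rewrite seq_app, sumR_app.
  rewrite (sumR_ext_in _ (fun _ => 1) (seq 0 _)), (sumR_ext_in _ (fun _ => -1) (seq (0 + _) _)).
  - rewrite !sumR_const, !length_seq, S_INR; ring.
  - intros k Hk; apply in_seq in Hk; unfold mm_sign, MM; rewrite Z.mod_small, Hhalf by lia.
    destruct (Z.leb_spec (Z.of_nat k) w); [lia|reflexivity].
  - intros k Hk; apply in_seq in Hk; unfold mm_sign, MM; rewrite Z.mod_small, Hhalf by lia.
    destruct (Z.leb_spec (Z.of_nat k) w); [reflexivity|lia].
Qed.

Lemma prime_odd (p : Z) : prime p -> p <> 2%Z -> Z.odd p = true.
Proof.
  intros Hp H2; destruct (Z.odd p) eqn:E; [reflexivity|].
  assert (Hd : (2 | p)%Z) by (exists (Z.div2 p); rewrite (Z.div2_odd p) at 1; rewrite E; simpl Z.b2z; lia).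
  pose proof (prime_divisors p Hp 2 Hd); pose proof (prime_ge_2 p Hp); lia.
Qed.

Lemma not_divide_double_prime (p r a v : Z) :
  prime p -> Z.odd p = true -> (1 <= r < p)%Z -> (1 <= a < p)%Z ->
  ~ (2 * p | 2 * r * a + p * v)%Z.
Proof.
  intros Hp Hodd Hr Ha [c Hc].
  destruct (Z.odd v) eqn:Hv.
  - apply (f_equal Z.odd) in Hc.
    rewrite Z.odd_add, !Z.odd_mul, Hodd, Hv in Hc; simpl in Hc.
    rewrite Bool.andb_false_r in Hc; discriminate.
  - rewrite (Z.div2_odd v), Hv in Hc; simpl Z.b2z in Hc.
    assert (Hd : (p | r * a)%Z) by (exists (c - Z.div2 v)%Z; nia).
    apply prime_mult in Hd as [Hd|Hd]; auto; apply Z.divide_pos_le in Hd; lia.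
Qed.

Lemma length_bool_vectors (t : nat) : length (bool_vectors t) = (2 ^ t)%nat.
Proof. induction t as [|t IH]; simpl; [|rewrite length_app, !length_map, IH]; lia. Qed.

Lemma length_in_bool_vectors (t : nat) (x : list bool) :
  In x (bool_vectors t) -> length x = t.
Proof.
  revert x; induction t as [|t IH]; simpl; intros x Hx.
  - destruct Hx as [<-|[]]; reflexivity.
  - apply in_app_or in Hx as [Hx|Hx]; apply in_map_iff in Hx as [y [<- Hy]];
      simpl; f_equal; auto.
Qed.

Fixpoint dotR (th : nat -> R) (k : nat) (x : list bool) : R :=
  match x with
  | [] => 0
  | b :: y => (if b then th k else 0) + dotR th (S k) y
  end.

Lemma dotR_lincomb (al be : R) (f g : nat -> R) (k : nat) (x : list bool) :
  dotR (fun i => al * f i + be * g i) k x = al * dotR f k x + be * dotR g k x.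
Proof.
  revert k; induction x as [|b y IH]; intros k; simpl; [ring|].
  rewrite IH; destruct b; ring.
Qed.

Lemma IZR_sum_bits (c : nat -> Z) (x : list bool) (k : nat) :
  IZR (fold_right Z.add 0%Z (map (fun i => c i * (if nth (i - k) x false then 1 else 0))%Z
        (seq k (length x))))
  = dotR (fun i => IZR (c i)) k x.
Proof.
  revert k; induction x as [|b y IH]; intros k; simpl; [reflexivity|].
  rewrite Nat.sub_diag, plus_IZR, <- (IH (S k)).
  f_equal.
  - destruct b; rewrite ?Z.mul_1_r, ?Z.mul_0_r; reflexivity.
  - do 2 f_equal; apply map_ext_in; intros i Hi; apply in_seq in Hi.
    replace (i - k)%nat with (S (i - S k)) by lia; reflexivity.
Qed.

Lemma IZR_lin_form (c : nat -> Z) (t : nat) (x : list bool) : length x = t ->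
  IZR (lin_form c t x) = IZR (c 0%nat) + dotR (fun i => IZR (c i)) 1 x.
Proof. intros <-; unfold lin_form, bit; rewrite plus_IZR, IZR_sum_bits; reflexivity. Qed.

(* Pairing x with its flip in the first coordinate:
   cos A + cos (A + th) = 2 cos (th / 2) cos (A + th / 2). *)
Lemma sum_cube_cos_le (th : nat -> R) (c : R) (t : nat) : forall (k : nat) (phi : R),
  (forall i, (k <= i < k + t)%nat -> Rabs (cos (th i / 2)) <= c) ->
  Rabs (sumR (fun x => cos (phi + dotR th k x)) (bool_vectors t)) <= 2 ^ t * c ^ t.
Proof.
  induction t as [|t IH]; intros k phi Hc; simpl.
  - rewrite !Rplus_0_r, Rmult_1_r; apply Rabs_le; apply COS_bound.
  - rewrite sumR_app, !sumR_map, <- sumR_plus; simpl.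
    rewrite (sumR_ext_in _ (fun y => 2 * cos (th k / 2) * cos (phi + th k / 2 + dotR th (S k) y))).
    2:{ intros y _; rewrite form1.
        replace ((phi + (0 + dotR th (S k) y) - (phi + (th k + dotR th (S k) y))) / 2)
          with (- (th k / 2)) by field.
        rewrite cos_neg; do 2 f_equal; field. }
    rewrite sumR_scal_l, !Rabs_mult, (Rabs_right 2) by lra.
    replace (2 * 2 ^ t * (c * c ^ t)) with (2 * (c * (2 ^ t * c ^ t))) by ring.
    rewrite Rmult_assoc; apply Rmult_le_compat_l; [lra|].
    apply Rmult_le_compat; try apply Rabs_pos.
    + apply Hc; lia.
    + apply IH; intros i Hi; apply Hc; lia.
Qed.

Definition rho (p : Z) : R := cos (PI / (2 * IZR p)).

Lemma rho_nonneg (p : Z) : (1 <= p)%Z -> 0 <= rho p.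
Proof.
  intros Hp; assert (Pp : 1 <= IZR p) by (apply IZR_le; lia).
  pose proof PI_RGT_0.
  assert (H0 : 0 <= PI / (2 * IZR p))
    by (unfold Rdiv; apply Rmult_le_pos; [lra|left; apply Rinv_0_lt_compat; lra]).
  apply cos_ge_0; [lra|].
  unfold Rdiv; apply Rmult_le_compat_l; [lra|]; apply Rinv_le_contravar; lra.
Qed.

Lemma sum_cube_cos_linear_le (p : Z) (t : nat) (a u : nat -> Z) (r k : nat) (s : Z) :
  prime p -> Z.odd p = true -> (1 <= Z.of_nat r < p)%Z ->
  (forall i, (1 <= i <= t)%nat -> (1 <= a i < p)%Z) ->
  Rabs (sumR (fun x => cos (2 * PI * INR r * IZR (lin_form a t x - Z.of_nat k) / IZR p
                            + IZR s * (PI * IZR (lin_form u t x)))) (bool_vectors t))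
  <= 2 ^ t * rho p ^ t.
Proof.
  intros Hp Hodd Hr Ha.
  assert (Pp : 0 < IZR p) by (apply IZR_lt; pose proof (prime_ge_2 p Hp); lia).
  set (th := fun i => 2 * PI * INR r / IZR p * IZR (a i) + IZR s * PI * IZR (u i)).
  set (phi := 2 * PI * INR r * (IZR (a 0%nat) - INR k) / IZR p + IZR s * PI * IZR (u 0%nat)).
  rewrite (sumR_ext_in _ (fun x => cos (phi + dotR th 1 x))).
  2:{ intros x Hx; apply length_in_bool_vectors in Hx.
      rewrite minus_IZR, !IZR_lin_form by exact Hx.
      unfold th, phi; rewrite dotR_lincomb, <- INR_IZR_INZ.
      f_equal; field; lra. }
  apply sum_cube_cos_le; intros i Hi; unfold th.
  replace ((2 * PI * INR r / IZR p * IZR (a i) + IZR s * PI * IZR (u i)) / 2)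
    with (PI * IZR (2 * Z.of_nat r * a i + p * (s * u i)) / IZR (2 * p))
    by (rewrite plus_IZR, !mult_IZR, <- INR_IZR_INZ; field; lra).
  unfold rho; rewrite <- (mult_IZR 2 p).
  apply Rabs_cos_PI_div_le; [lia|].
  apply not_divide_double_prime; auto; apply Ha; lia.
Qed.

Lemma sum_cube_cos_mul_cos_le (p : Z) (t : nat) (a u : nat -> Z) (r k : nat) :
  prime p -> Z.odd p = true -> (1 <= Z.of_nat r < p)%Z ->
  (forall i, (1 <= i <= t)%nat -> (1 <= a i < p)%Z) ->
  Rabs (sumR (fun x => cos (2 * PI * INR r * IZR (lin_form a t x - Z.of_nat k) / IZR p)
                       * cos (PI * IZR (lin_form u t x))) (bool_vectors t))
  <= 2 ^ t * rho p ^ t.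
Proof.
  intros Hp Hodd Hr Ha.
  rewrite (sumR_ext_in _ (fun x =>
    / 2 * (cos (2 * PI * INR r * IZR (lin_form a t x - Z.of_nat k) / IZR p
                + 1 * (PI * IZR (lin_form u t x)))
         + cos (2 * PI * INR r * IZR (lin_form a t x - Z.of_nat k) / IZR p
                + -1 * (PI * IZR (lin_form u t x)))))).
  2:{ intros x _; set (B := PI * IZR (lin_form u t x)).
      replace (1 * B) with B by ring; replace (-1 * B) with (- B) by ring.
      rewrite !cos_plus, cos_neg, sin_neg; field. }
  rewrite sumR_scal_l, sumR_plus, Rabs_mult, Rabs_right by lra.
  pose proof (Rabs_triang
    (sumR (fun x => cos (2 * PI * INR r * IZR (lin_form a t x - Z.of_nat k) / IZR p
                        + 1 * (PI * IZR (lin_form u t x)))) (bool_vectors t))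
    (sumR (fun x => cos (2 * PI * INR r * IZR (lin_form a t x - Z.of_nat k) / IZR p
                        + -1 * (PI * IZR (lin_form u t x)))) (bool_vectors t))).
  pose proof (sum_cube_cos_linear_le p t a u r k 1 Hp Hodd Hr Ha).
  pose proof (sum_cube_cos_linear_le p t a u r k (-1) Hp Hodd Hr Ha).
  lra.
Qed.

Lemma Rabs_sum_cube_cos_le (t : nat) (f : list bool -> R) :
  Rabs (sumR (fun x => cos (f x)) (bool_vectors t)) <= 2 ^ t.
Proof.
  eapply Rle_trans.
  - apply (sumR_abs_le _ _ 1); intros x _; apply Rabs_le, COS_bound.
  - rewrite length_bool_vectors, pow_INR, Rmult_1_r; right; f_equal; simpl; lra.
Qed.

Lemma sum_mm_sign_mul_fourier {A : Type} (p : Z) (S : A -> Z) (W : A -> R) (l : list A) :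
  (0 < p)%Z ->
  sumR (fun x => mm_sign p (S x) * W x) l
  = / IZR p * sumR (fun r => sumR (fun k => mm_sign p (Z.of_nat k)
      * sumR (fun x => cos (2 * PI * INR r * IZR (S x - Z.of_nat k) / IZR p) * W x) l)
      (seq 0 (Z.to_nat p))) (seq 0 (Z.to_nat p)).
Proof.
  intros Hp; set (P := Z.to_nat p).
  assert (HP : INR P = IZR p) by (unfold P; rewrite INR_IZR_INZ, Z2Nat.id by lia; reflexivity).
  assert (Pp : 0 < IZR p) by (apply IZR_lt; lia).
  rewrite (sumR_ext_in _ (fun x => / IZR p * sumR (fun r => sumR (fun k =>
      mm_sign p (Z.of_nat k) * (cos (2 * PI * INR r * IZR (S x - Z.of_nat k) / IZR p) * W x))
      (seq 0 P)) (seq 0 P))).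
  - rewrite sumR_scal_l, sumR_swap; f_equal.
    apply sumR_ext_in; intros r _; rewrite sumR_swap.
    apply sumR_ext_in; intros k _; apply sumR_scal_l.
  - intros x _.
    replace (mm_sign p (S x)) with (/ IZR p * (INR P * mm_sign p (S x))) by (rewrite HP; field; lra).
    rewrite (cos_fourier_periodic P (mm_sign p) (S x)).
    + rewrite HP, Rmult_assoc, sumR_scal_r; f_equal.
      apply sumR_ext_in; intros r _; rewrite sumR_scal_r.
      apply sumR_ext_in; intros k _; ring.
    + unfold P; lia.
    + intros z; unfold P; rewrite Z2Nat.id by lia; apply mm_sign_mod, Hp.
Qed.

Lemma sum_cube_mm_sign_cos_le (p : Z) (t : nat) (a u : nat -> Z) :
  prime p -> Z.odd p = true -> (forall i, (1 <= i <= t)%nat -> (1 <= a i < p)%Z) ->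
  Rabs (sumR (fun x => mm_sign p (lin_form a t x) * cos (PI * IZR (lin_form u t x)))
          (bool_vectors t))
  <= 2 ^ t * (/ IZR p + IZR p * rho p ^ t).
Proof.
  intros Hp Hodd Ha.
  pose proof (prime_ge_2 p Hp) as Hp2.
  assert (Pp : 0 < IZR p) by (apply IZR_lt; lia).
  rewrite sum_mm_sign_mul_fourier by lia.
  set (P := Z.to_nat p).
  assert (HP : INR P = IZR p) by (unfold P; rewrite INR_IZR_INZ, Z2Nat.id by lia; reflexivity).
  set (row := fun r => sumR (fun k => mm_sign p (Z.of_nat k) * sumR (fun x =>
      cos (2 * PI * INR r * IZR (lin_form a t x - Z.of_nat k) / IZR p)
      * cos (PI * IZR (lin_form u t x))) (bool_vectors t)) (seq 0 P)).
  set (V := sumR (fun x => cos (PI * IZR (lin_form u t x))) (bool_vectors t)).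
  assert (Hrow0 : row 0%nat = V).
  { unfold row; rewrite (sumR_ext_in _ (fun k => V * mm_sign p (Z.of_nat k))).
    - rewrite sumR_scal_l, sum_mm_sign by (auto; lia); ring.
    - intros k _; unfold V; rewrite Rmult_comm; f_equal.
      apply sumR_ext_in; intros x _.
      replace (2 * PI * INR 0 * IZR (lin_form a t x - Z.of_nat k) / IZR p) with 0
        by (simpl; field; lra).
      rewrite cos_0; ring. }
  assert (HV : Rabs V <= 2 ^ t) by apply Rabs_sum_cube_cos_le.
  assert (Hrows : Rabs (sumR row (seq 1 (P - 1))) <= INR (P - 1) * (IZR p * (2 ^ t * rho p ^ t))).
  { eapply Rle_trans; [apply sumR_abs_le | rewrite length_seq; apply Rle_refl].
    intros r Hr; apply in_seq in Hr; unfold row.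
    eapply Rle_trans; [apply sumR_abs_le | rewrite length_seq, HP; apply Rle_refl].
    intros k _; rewrite Rabs_mult, Rabs_mm_sign, Rmult_1_l.
    apply sum_cube_cos_mul_cos_le; auto; unfold P in Hr; lia. }
  assert (Hseq : seq 0 P = 0%nat :: seq 1 (P - 1))
    by (replace P with (S (P - 1)) at 1 by (unfold P; lia); reflexivity).
  rewrite Hseq; cbn [sumR]; rewrite Hrow0.
  assert (HPp : INR (P - 1) <= IZR p) by (rewrite <- HP; apply le_INR; lia).
  assert (Hrho : 0 <= 2 ^ t * rho p ^ t)
    by (apply Rmult_le_pos; apply pow_le; [lra | apply rho_nonneg; lia]).
  rewrite Rabs_mult, Rabs_right by (left; apply Rinv_0_lt_compat; lra).
  pose proof (Rabs_triang V (sumR row (seq 1 (P - 1)))).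
  assert (INR (P - 1) * (IZR p * (2 ^ t * rho p ^ t)) <= IZR p * (IZR p * (2 ^ t * rho p ^ t)))
    by (apply Rmult_le_compat_r; [apply Rmult_le_pos|]; lra).
  apply Rle_trans with (/ IZR p * (2 ^ t + IZR p * (IZR p * (2 ^ t * rho p ^ t)))).
  - apply Rmult_le_compat_l; [left; apply Rinv_0_lt_compat|]; lra.
  - right; field; lra.
Qed.

Lemma prob_unif_nonneg (t : nat) (P : list bool -> bool) : 0 <= prob_unif t P.
Proof.
  unfold prob_unif, Rdiv; apply Rmult_le_pos; [apply pos_INR|].
  left; apply Rinv_0_lt_compat, pow_lt; lra.
Qed.

Lemma prob_mm_parity_ge_corr (p : Z) (t : nat) (a u : nat -> Z) (b : bool) :
  prime p -> Z.odd p = true -> (forall i, (1 <= i <= t)%nat -> (1 <= a i < p)%Z) ->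
  prob_unif t (fun x => Bool.eqb (xorb (MM p (lin_form a t x)) (Z.odd (lin_form u t x))) b)
  >= 1 / 2 - (/ IZR p + IZR p * rho p ^ t) / 2.
Proof.
  intros Hp Hodd Ha.
  set (corr := sumR (fun x => mm_sign p (lin_form a t x) * cos (PI * IZR (lin_form u t x)))
                 (bool_vectors t)).
  set (sg := if b then -1 else 1).
  assert (H2t : 0 < 2 ^ t) by (apply pow_lt; lra).
  assert (Hprob : prob_unif t (fun x => Bool.eqb (xorb (MM p (lin_form a t x))
                                          (Z.odd (lin_form u t x))) b)
                  = / 2 + sg * corr / 2 ^ t / 2).
  { unfold prob_unif; rewrite count_filter_sumR.
    rewrite (sumR_ext_in _ (fun x => / 2 + sg / 2 * (mm_sign p (lin_form a t x)
                                                      * cos (PI * IZR (lin_form u t x))))).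
    - rewrite sumR_plus, sumR_const, sumR_scal_l, length_bool_vectors, pow_INR; fold corr.
      replace (INR 2) with 2 by (simpl; lra); field; lra.
    - intros x _; unfold sg, mm_sign; rewrite cos_PI_IZR.
      destruct (MM p (lin_form a t x)), (Z.odd (lin_form u t x)), b; simpl; lra. }
  pose proof (sum_cube_mm_sign_cos_le p t a u Hp Hodd Ha) as Hcorr; fold corr in Hcorr.
  assert (Hsg : - (sg * corr) <= Rabs corr).
  { eapply Rle_trans; [apply Rle_abs|].
    rewrite Rabs_Ropp, Rabs_mult; unfold sg; destruct b;
      [rewrite Rabs_left by lra | rewrite Rabs_R1]; lra. }
  assert (Hdiv : - (sg * corr / 2 ^ t) <= / IZR p + IZR p * rho p ^ t).
  { apply (Rmult_le_reg_r (2 ^ t)); [exact H2t|].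
    replace (- (sg * corr / 2 ^ t) * 2 ^ t) with (- (sg * corr)) by (field; lra).
    lra. }
  rewrite Hprob; lra.
Qed.

Lemma cos_le_1_sub_sq_div_4 (y : R) : -1 <= y <= 1 -> cos y <= 1 - y ^ 2 / 4.
Proof.
  intros Hy; destruct (pre_cos_bound y 0) as [_ Hub]; [lra|lra|].
  unfold cos_approx, cos_term in Hub; simpl in Hub.
  assert (Hsq : 0 <= y * y <= 1) by nra.
  assert (y * (y * (y * (y * 1))) <= y * (y * 1)) by nra.
  simpl; lra.
Qed.

Lemma rho_le_exp (p : Z) : (2 <= p)%Z -> rho p <= exp (- / (4 * IZR p ^ 2)).
Proof.
  intros Hp; assert (Pp : 2 <= IZR p) by (apply IZR_le; lia).
  pose proof PI2_1; pose proof PI_4.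
  assert (Hlo : / IZR p <= PI / (2 * IZR p)).
  { apply (Rmult_le_reg_r (2 * IZR p)); [lra|].
    replace (PI / (2 * IZR p) * (2 * IZR p)) with PI by (field; lra).
    replace (/ IZR p * (2 * IZR p)) with 2 by (field; lra); lra. }
  assert (Hhi : PI / (2 * IZR p) <= 1).
  { apply (Rmult_le_reg_r (2 * IZR p)); [lra|].
    replace (PI / (2 * IZR p) * (2 * IZR p)) with PI by (field; lra); lra. }
  assert (Hinv : 0 < / IZR p) by (apply Rinv_0_lt_compat; lra).
  unfold rho; eapply Rle_trans; [apply cos_le_1_sub_sq_div_4; lra|].
  eapply Rle_trans; [|apply exp_ineq1_le].
  assert ((/ IZR p) ^ 2 <= (PI / (2 * IZR p)) ^ 2) by (apply pow_incr; lra).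
  replace (/ (4 * IZR p ^ 2)) with ((/ IZR p) ^ 2 / 4) by (field; lra); lra.
Qed.

Lemma exp_le_exp (x y : R) : x <= y -> exp x <= exp y.
Proof. intros [Hlt| ->]; [left; apply exp_increasing, Hlt | right; reflexivity]. Qed.

Lemma pow_le_exp_neg (y d : R) (t : nat) :
  0 <= y -> y <= exp (- d) -> y ^ t <= exp (- (INR t * d)).
Proof.
  intros Hy Hyd; induction t as [|t IH].
  - simpl; rewrite Rmult_0_l, Ropp_0, exp_0; lra.
  - rewrite S_INR; replace (- ((INR t + 1) * d)) with (- d + - (INR t * d)) by ring.
    rewrite exp_plus; simpl; apply Rmult_le_compat; auto using pow_le.
Qed.

Lemma sq_div_4_le_exp (z : R) : 0 <= z -> z ^ 2 / 4 <= exp z.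
Proof.
  intros Hz; replace z with (z / 2 + z / 2) at 2 by field.
  rewrite exp_plus; pose proof (exp_ineq1_le (z / 2)); nra.
Qed.

Lemma mul_exp_neg_le (k x : R) : 0 < k -> 0 < x -> x * exp (- (k * x)) <= 4 / (k ^ 2 * x).
Proof.
  intros Hk Hx; rewrite exp_Ropp.
  pose proof (sq_div_4_le_exp (k * x) ltac:(nra)) as Hsq.
  pose proof (exp_pos (k * x)) as He.
  assert (Hk2 : 0 < k ^ 2 * x) by (apply Rmult_lt_0_compat; [apply pow_lt|]; lra).
  apply (Rmult_le_reg_r (exp (k * x) * (k ^ 2 * x))); [apply Rmult_lt_0_compat; lra|].
  replace (x * / exp (k * x) * (exp (k * x) * (k ^ 2 * x))) with (k ^ 2 * x * x) by (field; lra).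
  replace (4 / (k ^ 2 * x) * (exp (k * x) * (k ^ 2 * x))) with (4 * exp (k * x)) by (field; lra).
  replace (k ^ 2 * x * x) with (4 * ((k * x) ^ 2 / 4)) by field; lra.
Qed.

Lemma fourier_error_le (p : Z) (t : nat) (c3 : R) :
  (2 <= p)%Z -> 0 < c3 -> c3 * IZR p ^ 3 <= INR t ->
  (/ IZR p + IZR p * rho p ^ t) / 2 <= (1 + 32 / c3 ^ 2) / IZR p.
Proof.
  intros Hp Hc Ht; assert (Pp : 2 <= IZR p) by (apply IZR_le; lia).
  assert (Hrho : rho p ^ t <= exp (- (c3 / 4 * IZR p))).
  { eapply Rle_trans.
    - apply pow_le_exp_neg; [apply rho_nonneg; lia | apply rho_le_exp, Hp].
    - apply exp_le_exp, Ropp_le_contravar.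
      apply (Rmult_le_reg_r (4 * IZR p ^ 2)); [nra|].
      replace (c3 / 4 * IZR p * (4 * IZR p ^ 2)) with (c3 * IZR p ^ 3) by field.
      replace (INR t * / (4 * IZR p ^ 2) * (4 * IZR p ^ 2)) with (INR t) by (field; lra).
      exact Ht. }
  pose proof (mul_exp_neg_le (c3 / 4) (IZR p) ltac:(lra) ltac:(lra)) as Hmul.
  assert (IZR p * rho p ^ t <= IZR p * exp (- (c3 / 4 * IZR p)))
    by (apply Rmult_le_compat_l; lra).
  replace (4 / ((c3 / 4) ^ 2 * IZR p)) with (64 / c3 ^ 2 / IZR p) in Hmul by (field; lra).
  assert (0 <= 1 / IZR p) by (unfold Rdiv; apply Rmult_le_pos; [lra | left; apply Rinv_0_lt_compat; lra]).
  replace ((1 + 32 / c3 ^ 2) / IZR p) with (1 / IZR p + 64 / c3 ^ 2 / IZR p / 2) by (field; lra).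
  replace (/ IZR p) with (1 / IZR p) by (field; lra).
  lra.
Qed.

Lemma prob_mm_parity_ge (p : Z) (t : nat) (c3 : R) (a u : nat -> Z) (b : bool) :
  prime p -> 0 < c3 -> c3 * IZR p ^ 3 <= INR t ->
  (forall i, (1 <= i <= t)%nat -> (1 <= a i < p)%Z) ->
  prob_unif t (fun x => Bool.eqb (xorb (MM p (lin_form a t x)) (Z.odd (lin_form u t x))) b)
  >= 1 / 2 - (1 + 32 / c3 ^ 2) / IZR p.
Proof.
  intros Hp Hc Ht Ha.
  assert (HK : 0 <= 32 / c3 ^ 2)
    by (unfold Rdiv; apply Rmult_le_pos; [lra | left; apply Rinv_0_lt_compat; nra]).
  destruct (Z.eq_dec p 2) as [->|Hp2].
  - apply Rle_ge; eapply Rle_trans; [|apply prob_unif_nonneg]; lra.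
  - eapply Rge_trans; [apply prob_mm_parity_ge_corr; auto using prime_odd|].
    pose proof (fourier_error_le p t c3 (prime_ge_2 p Hp) Hc Ht); lra.
Qed.

Lemma mul_ln_le_Rpower (x alpha : R) : alpha * ln x <= Rpower x alpha.
Proof. unfold Rpower; pose proof (exp_ineq1_le (alpha * ln x)); lra. Qed.

Lemma lt_of_le_mul_div (x y c L : R) : 0 < y -> 0 < c < L -> x <= c * y / L -> x < y.
Proof.
  intros Hy HcL Hx; eapply Rle_lt_trans; [exact Hx|].
  apply (Rmult_lt_reg_r L); [lra|].
  replace (c * y / L * L) with (c * y) by (field; lra); nra.
Qed.

Lemma Rdiv_le_contravar_r (K x y : R) : 0 <= K -> 0 < x -> x <= y -> K / y <= K / x.
Proof. intros; unfold Rdiv; apply Rmult_le_compat_l; [lra|]; apply Rinv_le_contravar; lra. Qed.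

Theorem lemma5p4 (alpha c1 c2 c3 c4 : R) :
  0 < alpha < 1 -> 0 < c1 -> 0 < c2 -> 0 < c3 -> 0 < c4 ->
  exists (C : R) (n0 : nat), 0 < C /\
    forall (n : nat) (p : Z) (t : nat) (b : bool) (a u : nat -> Z),
      (n0 <= n)%nat ->
      prime p ->
      c1 * Rpower (INR n) alpha <= IZR p <= c2 * Rpower (INR n) alpha ->
      c3 * IZR p ^ 3 <= INR t ->
      (forall i : nat, (1 <= i <= t)%nat ->
         1 <= IZR (a i) <= c4 * IZR p / ln (INR n)) ->
      prob_unif t (fun x => Bool.eqb (xorb (MM p (lin_form a t x)) (Z.odd (lin_form u t x))) b)
        >= 1 / 2 - C / ln (INR n).
Proof.
  intros Halpha Hc1 Hc2 Hc3 Hc4.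
  set (K := 1 + 32 / c3 ^ 2).
  assert (HK : 0 < K)
    by (unfold K, Rdiv; assert (0 < / c3 ^ 2) by (apply Rinv_0_lt_compat; nra); nra).
  assert (Hac : 0 < alpha * c1) by nra.
  set (C := c4 + K / (alpha * c1)).
  assert (HC : K / (alpha * c1) <= C - c4) by (unfold C; lra).
  assert (HKac : 0 < K / (alpha * c1)) by (apply Rdiv_lt_0_compat; lra).
  exists C, 2%nat; split; [unfold C; lra|].
  intros n p t b a u Hn Hp [Hp1 _] Ht Ha.
  set (L := ln (INR n)) in *.
  assert (HL : 0 < L) by (unfold L; rewrite <- ln_1; apply ln_increasing; [lra|apply lt_1_INR; lia]).
  assert (HpL : alpha * c1 * L <= IZR p)
    by (pose proof (mul_ln_le_Rpower (INR n) alpha) as HR; fold L in HR; nra).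
  destruct (Rle_lt_dec L c4) as [Hsmall|Hlarge].
  - assert (1 <= C / L) by (apply (Rmult_le_reg_r L); [lra|]; replace (C / L * L) with C by (field; lra); lra).
    apply Rle_ge; eapply Rle_trans; [|apply prob_unif_nonneg]; lra.
  - eapply Rge_trans; [apply (prob_mm_parity_ge p t c3 a u b); auto|].
    + intros i Hi; destruct (Ha i Hi) as [Ha1 Ha2]; split; [apply le_IZR; exact Ha1|].
      apply lt_IZR, (lt_of_le_mul_div _ _ c4 L); [nra | lra | exact Ha2].
    + fold K; apply Rle_ge; cut (K / IZR p <= C / L); [lra|].
      eapply Rle_trans; [apply (Rdiv_le_contravar_r K (alpha * c1 * L)); nra|].
      replace (K / (alpha * c1 * L)) with (K / (alpha * c1) / L) by (field; lra).
      apply (Rmult_le_reg_r L); [lra|]; replace (C / L * L) with C by (field; lra).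
      replace (K / (alpha * c1) / L * L) with (K / (alpha * c1)) by (field; lra); lra.
Qed.
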